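(* Let $m,n\ge1$ and let $\lambda\subseteq\nu\subseteq(n-1)^{m-1}$ be partitions. For $X\in\mathrm{PASM}(\nu/\lambda,m,n)$ let $c_{ij}=\sum_{i'\le i,\,j'\le j}X_{i'j'}$ and let $\Psi(X)$ be the function $g_X$ on $P(\nu/\lambda)$ given by $g_X(i,j)=c_{ij}$. Then $\Psi(X)$ lies in the order polytope $\mathcal{O}(P(\nu/\lambda))$ for every $X\in\mathrm{PASM}(\nu/\lambda,m,n)$.
   Context: A partition $\mu=(\mu_1\ge\mu_2\ge\cdots)$ is a weakly decreasing sequence of nonnegative integers with finitely many nonzero terms, identified with the set of positions $\{(i,j):i\ge1,1\le j\le\mu_i\}$; $\mu\subseteq\nu$ means $\mu_i\le\nu_i$ for all $i$, and $\mu\subseteq a^b$ means $\mu$ has at most $b$ positive parts and $\mu_1\le a$. For $\mu\subseteq(n-1)^{m-1}$, the $m\times n$ matrix $M^\mu$ has entries $M^\mu_{1,\mu_1+1}=1$; for each $1\le k\le m-1$ with $\mu_k>\mu_{k+1}$, $M^\mu_{k+1,\mu_{k+1}+1}=1$ and $M^\mu_{k+1,\mu_k+1}=-1$; all other entries $0$. $\mathrm{PASM}(\nu/\lambda,m,n)$ is the convex hull in $\mathbb{R}^{mn}$ of $\{M^\mu:\lambda\subseteq\mu\subseteq\nu\}$. $P(\nu/\lambda)$ is the poset whose elements are the positions $(i,j)$ in $\nu$ but not in $\lambda$, ordered by $(i,j)\le(i',j')$ iff $i\le i'$ and $j\le j'$. For a finite poset $P$, the order polytope $\mathcal{O}(P)$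 is the set of functions $f:P\to\mathbb{R}$ with $0\le f(p)\le1$ for all $p$ and $f(p)\le f(q)$ whenever $p\le q$. *)

From HB Require Import structures.
From mathcomp Require Import all_boot all_order all_algebra.
Set Implicit Arguments. Unset Strict Implicit. Unset Printing Implicit Defensive.
Import Order.TTheory GRing.Theory Num.Theory.
Local Open Scope ring_scope.

(* Conventions: all indices are 0-based.  A partition mu is a function
   nat -> nat with mu i = mu_{i+1} (the (i+1)-st part in the paper). *)

Definition is_partition (mu : nat -> nat) : Prop :=
  (forall i, (mu i.+1 <= mu i)%N) /\ exists N, forall i, (N <= i)%N -> mu i = 0%N.

Definition part_sub (mu nu : nat -> nat) : Prop := forall i, (mu i <= nu i)%N.

Definition part_in_box (mu : nat -> nat) (a b : nat) : Prop :=
  (mu 0 <= a)%N /\ forall i, (b <= i)%N -> mu i = 0%N.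

(* The m x n matrix M^mu (0-based): row 0 has a 1 in column mu_1;
   row k (k >= 1, i.e. paper's row k+1) has, if mu_k > mu_{k+1},
   a 1 in column mu_{k+1} and a -1 in column mu_k. *)
Definition Mmat (R : pzRingType) (m n : nat) (mu : nat -> nat) : 'M[R]_(m, n) :=
  \matrix_(i < m, j < n)
    if (i == 0 :> nat) then ((j == mu 0%N :> nat)%:R : R)
    else if (mu i.-1 > mu i)%N then
      ((j == mu i :> nat)%:R - (j == mu i.-1 :> nat)%:R : R)
    else 0.

Definition in_PASM (R : realFieldType) (m n : nat) (lam nu : nat -> nat)
    (X : 'M[R]_(m, n)) : Prop :=
  exists (k : nat) (mus : 'I_k -> nat -> nat) (w : 'I_k -> R),
    [/\ forall t, 0 <= w t,
        \sum_(t < k) w t = 1,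
        forall t, is_partition (mus t) /\ part_sub lam (mus t) /\ part_sub (mus t) nu
      & X = \sum_(t < k) w t *: Mmat R m n (mus t)].

(* Elements of P(nu/lambda): positions (i,j) (0-based) in nu but not in lambda,
   i.e. lambda_{i+1} <= j < nu_{i+1}. *)
Definition in_skew (m n : nat) (lam nu : nat -> nat) (p : 'I_m * 'I_n) : bool :=
  (lam p.1 <= p.2)%N && (p.2 < nu p.1)%N.

Definition pos_le (m n : nat) (p q : 'I_m * 'I_n) : bool :=
  (p.1 <= q.1)%N && (p.2 <= q.2)%N.

Definition in_order_polytope (R : realFieldType) (T : Type) (P : T -> bool)
    (le : T -> T -> bool) (f : T -> R) : Prop :=
  (forall p, P p -> 0 <= f p <= 1) /\
  (forall p q, P p -> P q -> le p q -> f p <= f q).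

Definition cumsum (R : pzRingType) (m n : nat) (X : 'M[R]_(m, n)) (p : 'I_m * 'I_n) : R :=
  \sum_(i' < m | (i' <= p.1)%N) \sum_(j' < n | (j' <= p.2)%N) X i' j'.

Definition Psi (R : pzRingType) (m n : nat) (X : 'M[R]_(m, n)) : 'I_m * 'I_n -> R :=
  cumsum X.

From mathcomp Require Import all_boot all_order all_algebra.
Set Implicit Arguments. Unset Strict Implicit. Unset Printing Implicit Defensive.
Import Order.TTheory GRing.Theory Num.Theory.
Local Open Scope ring_scope.

(* Row i of M^mu is e_{mu_i} - e_{mu_(i-1)} (or e_{mu_0} for i = 0), so its
   row-prefix sums telescope down the rows: the cumulative sum matrix of M^mu
   is the 0/1 indicator of {(i, j) : mu_i <= j}, an up-set of the grid since
   mu is weakly decreasing.  Cumulative sums are linear, so Psi sends a convex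
   combination of the M^mu to the same convex combination of these monotone
   0/1 functions, which lies in the order polytope of any subposet of the grid. *)

Lemma sum_prefix_delta (R : pzSemiRingType) (n a b : nat) : (b < n)%N ->
  \sum_(j < n | (j <= b)%N) ((j == a :> nat)%:R : R) = ((a <= b)%N)%:R.
Proof.
move=> lt_bn; under eq_bigr do rewrite mulrb.
rewrite -big_mkcondr (big_ord1_cond_eq _ (fun=> 1) (fun j => j <= b)%N).
by have [le_ab|] := leqP a b; rewrite ?(leq_ltn_trans le_ab lt_bn) ?andbF.
Qed.

Lemma sum_prefix_telescope (V : zmodType) (m k : nat) (F : nat -> V) : (k < m)%N ->
  \sum_(i < m | (i <= k)%N) (F i.+1 - F i) = F k.+1 - F 0%N.
Proof.
case: m => // m; rewrite ltnS => le_km.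
rewrite (big_ord_narrow_leq le_km) /=.
by rewrite -(big_mkord xpredT (fun i => F i.+1 - F i)) telescope_sumr.
Qed.

Section CumsumMmat.

Variables (R : pzRingType) (m n : nat) (mu : nat -> nat).
Hypothesis mu_decr : forall i, (mu i.+1 <= mu i)%N.

Let shifted_indicator (b k : nat) : R := if k is k'.+1 then ((mu k' <= b)%N)%:R else 0.

Lemma Mmat_row_prefix_sum (i : 'I_m) (b : nat) : (b < n)%N ->
  \sum_(j < n | (j <= b)%N) Mmat R m n mu i j
    = shifted_indicator b i.+1 - shifted_indicator b i.
Proof.
move=> lt_bn; under eq_bigr do rewrite mxE.
case: i => [[|i] lt_im] /=; first by rewrite sum_prefix_delta ?subr0.
case: ltnP => [_|le_mu]; first by rewrite sumrB !sum_prefix_delta.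
have eq_mu : mu i = mu i.+1 by apply/eqP; rewrite eqn_leq le_mu mu_decr.
by rewrite big1 // eq_mu subrr.
Qed.

Lemma cumsum_Mmat (p : 'I_m * 'I_n) :
  cumsum (Mmat R m n mu) p = ((mu p.1 <= p.2)%N)%:R.
Proof.
rewrite /cumsum (eq_bigr _ (fun i _ => Mmat_row_prefix_sum i (ltn_ord p.2))).
by rewrite sum_prefix_telescope ?subr0 ?ltn_ord.
Qed.

End CumsumMmat.

Lemma cumsum_lincomb (R : pzRingType) (m n k : nat) (w : 'I_k -> R)
    (A : 'I_k -> 'M[R]_(m, n)) (p : 'I_m * 'I_n) :
  cumsum (\sum_(t < k) w t *: A t) p = \sum_(t < k) w t * cumsum (A t) p.
Proof.
rewrite /cumsum; under eq_bigr do under eq_bigr do rewrite summxE.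
under eq_bigr do rewrite exchange_big /=.
rewrite exchange_big; apply: eq_bigr => t _.
rewrite mulr_sumr; apply: eq_bigr => i _.
by rewrite mulr_sumr; apply: eq_bigr => j _; rewrite mxE.
Qed.

Lemma in_order_polytope_conv (R : realFieldType) (T : Type) (P : T -> bool)
    (le : T -> T -> bool) (k : nat) (w : 'I_k -> R) (g : 'I_k -> T -> R) (f : T -> R) :
  (forall t, 0 <= w t) -> \sum_(t < k) w t = 1 ->
  (forall t, in_order_polytope P le (g t)) ->
  f =1 (fun x => \sum_(t < k) w t * g t x) ->
  in_order_polytope P le f.
Proof.
move=> w_ge0 sum_w1 g_in f_conv.
split=> [x Px|x y Px Py le_xy]; rewrite !f_conv.
  have g_bounds t : 0 <= g t x <= 1 by exact: (g_in t).1.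
  apply/andP; split.
    by apply: sumr_ge0 => t _; case/andP: (g_bounds t) => g_ge0 _; rewrite mulr_ge0.
  rewrite -[leRHS]sum_w1; apply: ler_sum => t _.
  by case/andP: (g_bounds t) => _ g_le1; rewrite ler_piMr.
by apply: ler_sum => t _; rewrite ler_wpM2l // (g_in t).2.
Qed.

Lemma in_order_polytope_indicator (R : realFieldType) (m n : nat)
    (S : pred ('I_m * 'I_n)) (mu : nat -> nat) :
  (forall i, (mu i.+1 <= mu i)%N) ->
  in_order_polytope S (@pos_le m n) (fun p => ((mu p.1 <= p.2)%N)%:R : R).
Proof.
move=> mu_decr.
have mu_anti : {homo mu : i j / (i <= j)%N >-> (j <= i)%N}.
  by apply: homo_leq => // y x z le_yx le_zy; apply: leq_trans le_zy le_yx.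
split=> [p _|p q _ _ /andP[le_pq1 le_pq2]]; first by rewrite ler0n lern1 leq_b1.
rewrite ler_nat; case: (leqP (mu p.1) p.2) => //= le_mu_p.
by rewrite (leq_trans (mu_anti _ _ le_pq1) (leq_trans le_mu_p le_pq2)).
Qed.

Theorem mainTheorem4 (R : realFieldType) (m n : nat) (lam nu : nat -> nat) :
  (1 <= m)%N -> (1 <= n)%N ->
  is_partition lam -> is_partition nu ->
  part_sub lam nu -> part_in_box nu n.-1 m.-1 ->
  forall X : 'M[R]_(m, n), @in_PASM R m n lam nu X ->
  in_order_polytope (@in_skew m n lam nu) (@pos_le m n) (Psi X).
Proof.
move=> _ _ _ _ _ _ X [k [mus [w [w_ge0 sum_w1 mus_part ->]]]].
have mus_decr t : forall i, (mus t i.+1 <= mus t i)%N by case: (mus_part t) => [[]].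
apply: (in_order_polytope_conv
  (g := fun t (p : 'I_m * 'I_n) => ((mus t p.1 <= p.2)%N)%:R) w_ge0 sum_w1).
  by move=> t; exact: in_order_polytope_indicator _ _ (mus_decr t).
move=> p; rewrite /Psi cumsum_lincomb; apply: eq_bigr => t _.
by rewrite (cumsum_Mmat R (mus_decr t)).
Qed.
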